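(* Let $X$ be a $k$-dimensional complex with vertex set $[n]$ and complete $(k-1)$-skeleton, and let $b\in B^{k-1}(X)$. For $F\in X_{k-2}$ define $h_b(F):=\sum_{v\notin F}[F\cup\{v\}:F]\,b(F\cup\{v\})$. Fix $d>0$ and let $E=D_{k-1}(X)-dI$. Then: (a) $b(H)=\frac1n\sum_{F\in X_{k-2},\,F\subset H}[H:F]\,h_b(F)$ for every $H\in X_{k-1}$; (b) $\langle Eb,Eb\rangle\le\frac{k}{n^2}\sum_{F\in X_{k-2}}h_b(F)^2\langle E\delta_{k-2}e_F,E\delta_{k-2}e_F\rangle$; (c) $\sum_{F\in X_{k-2}}h_b(F)^2\le k(n-k+1)\langle b,b\rangle$.
   Context: Standard Euclidean inner product. Complexes have linearly ordered vertex sets; $X_i$ is the set of $i$-faces; $[F:G]$ is the oriented incidence number ($(-1)^j$ if $F\setminus G=\{v_j\}$, $F=\{v_0<\dots<v_i\}$; $0$ if $G\not\subseteq F$). Complete $(k-1)$-skeleton: every vertex set of size at most $k$ is a face. $(\delta_{k-2}f)(H)=\sum_{G}[H:G]f(G)$, $B^{k-1}(X)=\operatorname{im}\delta_{k-2}$, $e_F$ the indicator cochain of $F$. $D_{k-1}(X)$ is the diagonal matrix with entry $\deg(F)$ (number of $k$-faces containing $F$) at $F\in X_{k-1}$. *)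

From HB Require Import structures.
From mathcomp Require Import all_boot all_order all_algebra.
Set Implicit Arguments. Unset Strict Implicit. Unset Printing Implicit Defensive.
Import Order.TTheory GRing.Theory Num.Theory.
Local Open Scope ring_scope.

(* Faces are subsets of the vertex set [n] = 'I_n (ordered by the natural order).
   An i-face is a face with i+1 vertices. *)

Definition is_complex n (X : {set {set 'I_n}}) : Prop :=
  forall F G : {set 'I_n}, F \in X -> G \subset F -> G \in X.

Definition faces_sz n (X : {set {set 'I_n}}) (m : nat) : {set {set 'I_n}} :=
  [set F in X | #|F| == m].

Definition inc (R : ringType) n (F G : {set 'I_n}) : R :=
  match [pick v in F :\: G] with
  | Some v => if (G \subset F) && (#|F :\: G| == 1%N)
              then (-1) ^+ #|[set u in F | (val u < val v)%N]|
              else 0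
  | None => 0
  end.

Definition delta (R : ringType) n (X : {set {set 'I_n}}) (m : nat)
  (f : {set 'I_n} -> R) : {set 'I_n} -> R :=
  fun H => \sum_(G in faces_sz X m) inc R H G * f G.

Definition ip (R : ringType) n (X : {set {set 'I_n}}) (m : nat)
  (f g : {set 'I_n} -> R) : R :=
  \sum_(H in faces_sz X m) f H * g H.

Definition deg n (X : {set {set 'I_n}}) (F : {set 'I_n}) : nat :=
  #|[set G in X | (F \subset G) && (#|G| == #|F|.+1)]|.

Definition Eop (R : ringType) n (X : {set {set 'I_n}}) (d : R)
  (f : {set 'I_n} -> R) : {set 'I_n} -> R :=
  fun H => ((deg X H)%:R - d) * f H.

Definition ind (R : ringType) n (F : {set 'I_n}) : {set 'I_n} -> R :=
  fun G => if G == F then 1 else 0.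

(* b ∈ B^{k-1}(X) = im δ_{k-2} : b agrees on (k-1)-faces (k vertices) with δ g
   for some cochain g on (k-2)-faces (k-1 vertices) *)
Definition in_B (R : ringType) n (X : {set {set 'I_n}}) (k : nat)
  (b : {set 'I_n} -> R) : Prop :=
  exists g : {set 'I_n} -> R,
    forall H, H \in faces_sz X k -> b H = delta X (k - 1) g H.

Definition hb (R : ringType) n (b : {set 'I_n} -> R) (F : {set 'I_n}) : R :=
  \sum_(v | v \notin F) inc R (F :|: [set v]) F * b (F :|: [set v]).

From HB Require Import structures.
From mathcomp Require Import all_boot all_order all_algebra.
From mathcomp Require Import ring.

Set Implicit Arguments.
Unset Strict Implicit.
Unset Printing Implicit Defensive.
Import Order.TTheory GRing.Theory Num.Theory.
Local Open Scope ring_scope.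

(* For a (k-1)-face H and u in H, h_b(H - u) consists of the term [H : H - u] b(H)
   plus the terms b(H - u + v), v not in H.  Summed over u with the signs
   [H : H - u], the latter reduce, by the cocycle relation (delta b)(H + v) = 0,
   to b(H) for each of the n - k vertices v outside H; hence the signed sum of
   h_b over the k facets of H is n b(H), which is (a).  Parts (b) and (c) are
   Cauchy-Schwarz: over the k facets of H, weighted by (deg H - d)^2, for (b),
   since <E delta e_F, E delta e_F> is the sum of (deg H - d)^2 over H containing
   F; and over the n - k + 1 vertices outside F for (c), where every (k-1)-face
   is counted k times. *)

Lemma sqr_sum_le (R : realFieldType) (I : finType) (P : pred I) (x : I -> R) :
  (\sum_(i | P i) x i) ^+ 2 <= (\sum_(i | P i) 1) * \sum_(i | P i) x i ^+ 2.
Proof.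
set N := \sum_(i | P i) (1 : R); set S := \sum_(i | P i) x i.
set Q := \sum_(i | P i) x i ^+ 2.
have row i : \sum_(j | P j) (x i - x j) ^+ 2 = x i ^+ 2 * N + Q - 2 * x i * S.
  rewrite (eq_bigr (fun j => x i ^+ 2 * 1 + x j ^+ 2 - 2 * x i * x j)); last first.
    by move=> j _; ring.
  by rewrite !big_split /= sumrN -!big_distrr.
have lagrange : \sum_(i | P i) \sum_(j | P j) (x i - x j) ^+ 2 = 2 * (N * Q - S ^+ 2).
  rewrite (eq_bigr _ (fun i _ => row i)) !big_split /= sumrN -big_distrl /=.
  rewrite -/Q sumr_const -big_distrl -big_distrr /= -/S.
  have -> : Q *+ #|[pred i | P i]| = Q * N by rewrite /N sumr_const mulr_natr.
  ring.
have : 0 <= \sum_(i | P i) \sum_(j | P j) (x i - x j) ^+ 2.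
  by apply: sumr_ge0 => i _; apply: sumr_ge0 => j _; apply: sqr_ge0.
by rewrite lagrange pmulr_rge0 ?ltr0n // subr_ge0.
Qed.

Lemma setU1_of_cardsD1 (T : finType) (G H : {set T}) :
  G \subset H -> #|H :\: G| = 1%N -> exists2 v, v \notin G & H = G :|: [set v].
Proof.
move=> sGH /eqP/cards1P [v dHG].
have : v \in H :\: G by rewrite dHG set11.
rewrite inE => /andP[vG _]; exists v => //.
rewrite -dHG; apply/setP=> x; rewrite !inE.
by case: (boolP (x \in G)) => //= /(subsetP sGH).
Qed.

Lemma card_faces_sz n (X : {set {set 'I_n}}) m F : F \in faces_sz X m -> #|F| = m.
Proof. by rewrite inE => /andP[_ /eqP]. Qed.

Section Incidence.
Variables (R : comNzRingType) (n : nat).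
Implicit Types (F G H K : {set 'I_n}) (u v w a : 'I_n).

Definition below_sign F v : R := (-1) ^+ #|[set u in F | (val u < val v)%N]|.

Lemma inc_setU1 F v : v \notin F -> inc R (F :|: [set v]) F = below_sign F v.
Proof.
move=> vF; rewrite /inc.
have -> : (F :|: [set v]) :\: F = [set v].
  apply/setP=> x; rewrite !inE; case: eqP => [->|_]; first by rewrite vF orbT.
  by rewrite orbF andNb.
case: pickP => [x|]; last by move/(_ v); rewrite inE eqxx.
rewrite inE => /eqP ->; rewrite subsetUl cards1 /= /below_sign.
congr (_ ^+ _); apply: eq_card => y; rewrite !inE.
by case: eqP => [->|_]; rewrite ?ltnn ?andbF ?orbF.
Qed.

Lemma sqr_inc_setU1 F v : v \notin F -> inc R (F :|: [set v]) F ^+ 2 = 1.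
Proof. by move=> vF; rewrite inc_setU1 // sqrr_sign. Qed.

Lemma sqr_inc_setD1 H u : u \in H -> inc R H (H :\ u) ^+ 2 = 1.
Proof. by move=> uH; rewrite -{1}(setD1K uH) setUC sqr_inc_setU1 // !inE eqxx. Qed.

Lemma inc_eq0 H G : ~~ (G \subset H) -> inc R H G = 0.
Proof. by move=> nsGH; rewrite /inc; case: pickP => // v _; rewrite (negbTE nsGH). Qed.

Lemma inc_neq0_setU1 H G : inc R H G != 0 -> exists2 v, v \notin G & H = G :|: [set v].
Proof.
rewrite /inc; case: pickP => [v _|]; last by rewrite eqxx.
case: ifP => [/andP[sGH /eqP cHG] _|]; last by rewrite eqxx.
exact: setU1_of_cardsD1.
Qed.

Lemma below_sign_setU1 F a v : a \notin F ->
  below_sign (F :|: [set a]) v = below_sign F v * (if (val a < val v)%N then -1 else 1).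
Proof.
move=> aF; rewrite /below_sign; case: ifP => lt_av.
  have -> : [set u in F :|: [set a] | (val u < val v)%N] =
            a |: [set u in F | (val u < val v)%N].
    by apply/setP=> y; rewrite !inE; case: eqP => [->|_]; rewrite ?lt_av ?orbT ?orbF.
  by rewrite cardsU1 inE (negbTE aF) /= exprS mulrC.
have -> : [set u in F :|: [set a] | (val u < val v)%N] = [set u in F | (val u < val v)%N].
  by apply/setP=> y; rewrite !inE; case: eqP => [->|_]; rewrite ?lt_av ?orbF ?andbF.
by rewrite mulr1.
Qed.

Lemma inc_setU1_swap F a v : a \notin F -> v \notin F -> a != v ->
  inc R (F :|: [set a] :|: [set v]) (F :|: [set a]) *
  inc R (F :|: [set a] :|: [set v]) (F :|: [set v]) =
  - (inc R (F :|: [set a]) F * inc R (F :|: [set v]) F).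
Proof.
move=> aF vF av.
have aFv : a \notin F :|: [set v] by rewrite !inE negb_or aF.
have vFa : v \notin F :|: [set a] by rewrite !inE negb_or vF eq_sym.
rewrite inc_setU1 // -setUA (setUC [set a]) setUA !inc_setU1 //.
rewrite !below_sign_setU1 //.
by case: ltngtP (negP av) => // [lt_av|lt_va|/val_inj -> //] _; ring.
Qed.

Lemma sum_inc_inc_eq0 K G : \sum_(w in K) inc R K (K :\ w) * inc R (K :\ w) G = 0.
Proof.
case: (pickP [pred w in K | inc R (K :\ w) G != 0]) => [w0 /andP[w0K] | none]; last first.
  rewrite big1 // => w wK; move: (none w) => /=; rewrite wK /= => /negbFE/eqP ->.
  by rewrite mulr0.
move=> /inc_neq0_setU1 [a aG dKw0].
have : a \in K :\ w0 by rewrite dKw0 !inE eqxx orbT.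
rewrite !inE => /andP[aw0 aK].
have w0G : w0 \notin G.
  by apply/negP => w0G; have := setD11 w0 K; rewrite dKw0 inE w0G.
have dK : K = G :|: [set a] :|: [set w0] by rewrite -dKw0 setUC setD1K.
have dKa : K :\ a = G :|: [set w0].
  rewrite dK; apply/setP=> y; rewrite !inE.
  by case: (y =P a) => [->|_]; rewrite ?(negbTE aG) ?(negbTE aw0) ?orbF.
(* Only [w = w0] and [w = a] contribute, and their terms cancel. *)
rewrite (bigD1 w0) //= (bigD1 a) /=; last by rewrite aK aw0.
rewrite big1 ?addr0; last first.
  move=> w /andP[/andP[wK wnw0] wna]; rewrite (@inc_eq0 (K :\ w) G) ?mulr0 //.
  have wG : w \in G by move: wK; rewrite dK !inE (negbTE wnw0) (negbTE wna) !orbF.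
  by apply/negP => /subsetP /(_ w wG); rewrite !inE eqxx.
rewrite dKw0 dKa dK.
have cancel (x1 x2 y1 y2 : R) :
    x1 ^+ 2 = 1 -> y2 ^+ 2 = 1 -> x1 * x2 = - (y1 * y2) -> x1 * y1 + x2 * y2 = 0.
  move=> x1_sq y2_sq swap.
  have -> : x2 * y2 = x1 * (x1 * x2) * y2 by rewrite mulrA -expr2 x1_sq mul1r.
  rewrite swap; have -> : x1 * - (y1 * y2) * y2 = - (x1 * y1 * y2 ^+ 2) by ring.
  by rewrite y2_sq mulr1 subrr.
apply: cancel.
- by rewrite sqr_inc_setU1 // !inE negb_or w0G eq_sym.
- by rewrite sqr_inc_setU1.
- by rewrite inc_setU1_swap // eq_sym.
Qed.

Lemma hb_setD1 (b : {set 'I_n} -> R) H u : u \in H ->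
  hb b (H :\ u) = inc R H (H :\ u) * b H +
    \sum_(v | v \notin H) inc R (H :\ u :|: [set v]) (H :\ u) * b (H :\ u :|: [set v]).
Proof.
move=> uH; rewrite /hb (bigD1 u) /=; last by rewrite !inE eqxx.
rewrite setUC setD1K //; congr (_ + _); apply: eq_bigl => v; rewrite !inE.
by case: eqP => [->|_]; rewrite ?uH //= ?andbT.
Qed.

Variables (X : {set {set 'I_n}}) (m : nat).
Hypothesis skel : forall F, (#|F| <= m.+1)%N -> F \in X.

Lemma sum_facets (f : {set 'I_n} -> R) H : #|H| = m.+1 ->
  \sum_(F in faces_sz X m | F \subset H) f F = \sum_(u in H) f (H :\ u).
Proof.
move=> cH; rewrite -(big_imset _ (h := fun u => H :\ u)); last first.
  move=> u u' uH u'H /= eHu; apply/eqP; apply: contraT => ne.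
  by have := setD11 u H; rewrite eHu !inE ne uH.
apply: eq_bigl => F; rewrite /faces_sz inE; apply/idP/imsetP.
  move=> /andP[/andP[_ /eqP cF] sFH].
  have [|u uF dH] := setU1_of_cardsD1 sFH; first by rewrite cardsDS // cH cF subSnn.
  by exists u; rewrite dH ?inE ?eqxx ?orbT // setUC setU1K.
move=> [u uH ->]; rewrite subsetDl andbT.
have cHu : #|H :\ u| = m by move: cH; rewrite (cardsD1 u) uH => [[]].
by rewrite cHu eqxx andbT skel // cHu.
Qed.

Lemma sum_cofacets (f : {set 'I_n} -> R) F : #|F| = m ->
  \sum_(v | v \notin F) f (F :|: [set v]) =
  \sum_(H in faces_sz X m.+1 | F \subset H) f H.
Proof.
move=> cF; rewrite (eq_bigl [in ~: F]) => [|v]; last by rewrite inE.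
rewrite -(big_imset _ (h := fun v => F :|: [set v])); last first.
  move=> v v' vF v'F /= eFv; apply/eqP; apply: contraT => ne.
  have : v \in F :|: [set v'] by rewrite -eFv !inE eqxx orbT.
  by rewrite !inE (negbTE ne) orbF; move: vF; rewrite inE => /negbTE ->.
apply: eq_bigl => H; rewrite /faces_sz inE; symmetry; apply/idP/imsetP.
  move=> /andP[/andP[_ /eqP cH] sFH].
  have [|u uF dH] := setU1_of_cardsD1 sFH; first by rewrite cardsDS // cH cF subSnn.
  by exists u; rewrite ?inE.
move=> [u]; rewrite inE => uF ->; rewrite subsetUl andbT.
have cFu : #|F :|: [set u]| = m.+1 by rewrite setUC cardsU1 uF cF.
by rewrite cFu eqxx andbT skel // cFu.
Qed.

Lemma sum_faces_cofaces (f : {set 'I_n} -> R) :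
  \sum_(F in faces_sz X m) \sum_(H in faces_sz X m.+1 | F \subset H) f H =
  m.+1%:R * \sum_(H in faces_sz X m.+1) f H.
Proof.
rewrite (exchange_big_dep [in faces_sz X m.+1]) /=; last by move=> F H _ /andP[].
rewrite big_distrr /=; apply: eq_bigr => H HX; rewrite HX.
have cH := card_faces_sz HX.
by rewrite (sum_facets (fun=> f H)) // sumr_const cH mulr_natl.
Qed.

Lemma delta_ind F H : F \in faces_sz X m -> delta X m (ind R F) H = inc R H F.
Proof.
move=> FX; rewrite /delta (bigD1 F) //= big1 ?addr0; first by rewrite /ind eqxx mulr1.
by move=> G /andP[_ neGF]; rewrite /ind (negbTE neGF) mulr0.
Qed.

Lemma sum_mul_sqr_inc (g : {set 'I_n} -> R) H : #|H| = m.+1 ->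
  \sum_(F in faces_sz X m) g F * inc R H F ^+ 2 = \sum_(F in faces_sz X m | F \subset H) g F.
Proof.
move=> cH; rewrite (bigID (fun F => F \subset H)) /= [X in _ + X]big1 ?addr0; last first.
  by move=> F /andP[_ nsFH]; rewrite inc_eq0 // expr0n mulr0.
by rewrite !sum_facets //; apply: eq_bigr => u uH; rewrite sqr_inc_setD1 // mulr1.
Qed.

Variable b : {set 'I_n} -> R.
Hypothesis b_cobound : in_B X m.+1 b.

(* A coboundary is a cocycle because [delta] squares to zero. *)
Lemma in_B_cocycle K : #|K| = m.+2 -> \sum_(w in K) inc R K (K :\ w) * b (K :\ w) = 0.
Proof.
move=> cK; have [g dbg] := b_cobound.
under eq_bigr => w wK.
  have cKw : #|K :\ w| = m.+1 by move: cK; rewrite (cardsD1 w) wK => [[]].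
  have Kw_face : K :\ w \in faces_sz X m.+1 by rewrite inE cKw eqxx andbT skel ?cKw.
  rewrite dbg // /delta subSS subn0 big_distrr /=.
over.
rewrite exchange_big big1 // => G _.
under eq_bigr do rewrite mulrA.
by rewrite -big_distrl /= sum_inc_inc_eq0 mul0r.
Qed.

(* Apply the cocycle relation on [H :|: [set v]], the relative signs coming
   from [inc_setU1_swap]. *)
Lemma cocycle_facet_shift H v : #|H| = m.+1 -> v \notin H ->
  \sum_(u in H) inc R H (H :\ u) *
    (inc R (H :\ u :|: [set v]) (H :\ u) * b (H :\ u :|: [set v])) = b H.
Proof.
move=> cH vH; set K := H :|: [set v].
have cK : #|K| = m.+2 by rewrite /K setUC cardsU1 vH cH.
have dKv : K :\ v = H by rewrite /K setUC setU1K.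
have dKu u : u \in H -> H :\ u :|: [set v] = K :\ u.
  move=> uH; apply/setP => y; rewrite !inE; case: (y =P u) => [->|_] //=.
  by case: (u =P v) => // uv; move: vH; rewrite -uv uH.
under eq_bigr => u uH.
  have uv : u != v by apply: contraNneq vH => <-.
  have dH : H :\ u :|: [set u] = H by rewrite setUC setD1K.
  have uHu : u \notin H :\ u by rewrite setD11.
  have vHu : v \notin H :\ u by rewrite inE negb_and vH orbT.
  have swap : inc R H (H :\ u) * inc R (H :\ u :|: [set v]) (H :\ u) =
               - (inc R K H * inc R K (H :\ u :|: [set v])).
    by have := inc_setU1_swap uHu vHu uv; rewrite dH => ->; rewrite opprK.
  rewrite mulrA swap mulNr -mulrA dKu //.
over.
rewrite /= sumrN -big_distrr /=.
have := in_B_cocycle cK; rewrite (bigD1 v) /= ?dKv; last by rewrite !inE eqxx orbT.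
rewrite (eq_bigl [in H]) => [/eqP|w]; last first.
  by rewrite !inE; case: eqP => [->|_]; rewrite ?(negbTE vH) ?andbT ?orbF.
rewrite addrC addr_eq0 => /eqP ->.
by rewrite mulrN opprK mulrA -expr2 sqr_inc_setU1 ?mul1r.
Qed.

Lemma sum_inc_hb H : H \in faces_sz X m.+1 ->
  \sum_(F in faces_sz X m | F \subset H) inc R H F * hb b F = n%:R * b H.
Proof.
move=> /card_faces_sz cH; rewrite sum_facets //.
under eq_bigr => u uH.
  rewrite hb_setD1 // mulrDr mulrA -expr2 sqr_inc_setD1 // mul1r big_distrr /=.
over.
rewrite big_split /= exchange_big /=.
under [X in _ + X]eq_bigr => v vH do rewrite (cocycle_facet_shift cH vH).
rewrite [X in _ + X](eq_bigl [in ~: H] (fun=> b H)) => [|v]; last by rewrite inE.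
by rewrite !sumr_const -mulrnDr cardsC card_ord mulr_natl.
Qed.

End Incidence.

Section Bounds.
Variables (R : realFieldType) (n : nat) (X : {set {set 'I_n}}) (m : nat).
Hypothesis skel : forall F : {set 'I_n}, (#|F| <= m.+1)%N -> F \in X.
Variable b : {set 'I_n} -> R.
Hypothesis b_cobound : in_B X m.+1 b.

Lemma ip_Eop_le (d : R) : n%:R != 0 :> R ->
  ip X m.+1 (Eop X d b) (Eop X d b) <=
  m.+1%:R / n%:R ^+ 2 *
    \sum_(F in faces_sz X m)
      hb b F ^+ 2 * ip X m.+1 (Eop X d (delta X m (ind R F))) (Eop X d (delta X m (ind R F))).
Proof.
move=> n_neq0; pose e := fun H : {set 'I_n} => (deg X H)%:R - d.
pose Q := fun H : {set 'I_n} => \sum_(F in faces_sz X m | F \subset H) hb b F ^+ 2.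
have -> : \sum_(F in faces_sz X m)
      hb b F ^+ 2 * ip X m.+1 (Eop X d (delta X m (ind R F))) (Eop X d (delta X m (ind R F)))
    = \sum_(H in faces_sz X m.+1) e H ^+ 2 * Q H.
  rewrite /ip /Eop; under eq_bigr => F FX.
    rewrite big_distrr /=; under eq_bigr => H _ do rewrite !delta_ind // -/(e H).
  over.
  rewrite exchange_big /=; apply: eq_bigr => H /card_faces_sz cH.
  rewrite /Q -(sum_mul_sqr_inc skel) // big_distrr /=.
  by apply: eq_bigr => F _; ring.
rewrite /ip big_distrr /=; apply: ler_sum => H HX; have cH := card_faces_sz HX.
set S := \sum_(F in faces_sz X m | F \subset H) inc R H F * hb b F.
have bH : b H = n%:R^-1 * S by rewrite /S (sum_inc_hb skel b_cobound HX) mulKf.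
have cs_H : S ^+ 2 <= m.+1%:R * Q H.
  have := sqr_sum_le [pred F | (F \in faces_sz X m) && (F \subset H)] (fun F => inc R H F * hb b F).
  rewrite /= -/S (sum_facets skel (fun=> 1)) // sumr_const cH.
  rewrite /Q (sum_facets skel) // (sum_facets skel) //.
  under eq_bigr => u uH do rewrite exprMn sqr_inc_setD1 // mul1r.
  by rewrite mulr_natl.
rewrite /Eop -/(e H) bH.
have -> : e H * (n%:R^-1 * S) * (e H * (n%:R^-1 * S)) = (e H ^+ 2 / n%:R ^+ 2) * S ^+ 2.
  by rewrite -exprVn; ring.
have -> : m.+1%:R / n%:R ^+ 2 * (e H ^+ 2 * Q H) = (e H ^+ 2 / n%:R ^+ 2) * (m.+1%:R * Q H).
  by ring.
by apply: ler_wpM2l => //; rewrite divr_ge0 // sqr_ge0.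
Qed.

Lemma sum_sqr_hb_le : (m <= n)%N ->
  \sum_(F in faces_sz X m) hb b F ^+ 2 <= m.+1%:R * (n%:R - m.+1%:R + 1) * ip X m.+1 b b.
Proof.
move=> le_mn.
have -> : n%:R - m.+1%:R + 1 = (n - m)%:R :> R by rewrite natrB // -addn1 natrD; ring.
have hb_le F : F \in faces_sz X m ->
    hb b F ^+ 2 <= (n - m)%:R * \sum_(v | v \notin F) b (F :|: [set v]) ^+ 2.
  move=> /card_faces_sz cF.
  have := sqr_sum_le [pred v | v \notin F] (fun v => inc R (F :|: [set v]) F * b (F :|: [set v])).
  rewrite /= (eq_bigl [in ~: F] (fun=> 1)) => [|v]; last by rewrite inE.
  rewrite sumr_const -[#|~: F|](addKn #|F|) cardsC card_ord cF.
  by under [X in _ <= _ * X]eq_bigr => v vF do rewrite exprMn sqr_inc_setU1 // mul1r.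
apply: le_trans (ler_sum _ hb_le) _; rewrite -big_distrr /=.
under eq_bigr => F /card_faces_sz cF do rewrite (sum_cofacets skel (fun H => b H ^+ 2) cF).
by rewrite sum_faces_cofaces // mulrCA mulrA.
Qed.

End Bounds.

Theorem lemma3p8 (R : realFieldType) (n k : nat) (X : {set {set 'I_n}})
  (b : {set 'I_n} -> R) (d : R) :
  (1 <= k)%N ->
  is_complex X ->
  (forall F : {set 'I_n}, (#|F| <= k)%N -> F \in X) ->
  (forall F : {set 'I_n}, F \in X -> (#|F| <= k.+1)%N) ->
  (exists F : {set 'I_n}, F \in X /\ #|F| = k.+1) ->
  in_B X k b ->
  0 < d ->
  [/\ (forall H, H \in faces_sz X k ->
         b H = n%:R^-1 * \sum_(F in faces_sz X (k - 1) | F \subset H)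
                           inc R H F * hb b F),
      ip X k (Eop X d b) (Eop X d b)
        <= k%:R / n%:R ^+ 2 *
           \sum_(F in faces_sz X (k - 1))
              hb b F ^+ 2 *
              ip X k (Eop X d (delta X (k - 1) (ind R F)))
                     (Eop X d (delta X (k - 1) (ind R F)))
    & \sum_(F in faces_sz X (k - 1)) hb b F ^+ 2
        <= k%:R * (n%:R - k%:R + 1) * ip X k b b].
Proof.
(* Only the complete skeleton and one k-face (which forces k < n) are needed. *)
move=> k_ge1 _ skel _ [F0 [_ cF0]] b_cobound _.
case: k k_ge1 skel cF0 b_cobound => // m _ skel cF0 b_cobound; rewrite subSS subn0.
have lt_m1_n : (m.+1 < n)%N by have := max_card F0; rewrite card_ord cF0.
have n_neq0 : n%:R != 0 :> R by rewrite pnatr_eq0 -lt0n (ltn_trans _ lt_m1_n).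
split.
- by move=> H HX; rewrite (sum_inc_hb skel b_cobound HX) mulKf.
- exact: ip_Eop_le.
- exact/sum_sqr_hb_le/ltnW/ltnW.
Qed.
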